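(* Assume (H1), (H2). Fix $\lambda>f'(0)$ and let $s_*$ be a $\lambda$-conjugate point. Let $\mathcal W$ be a Lagrangian plane transverse to $\mathbb E^u_-(s_*,\lambda)$ and, for $s$ near $s_*$, let $A(s):\mathbb E^u_-(s_*,\lambda)\to\mathcal W$ be the linear map whose graph is $\mathbb E^u_-(s,\lambda)$. If $v\in\mathbb E^u_-(s_*,\lambda)\cap\ell_*^{sand}$ and $p(\cdot,\lambda)$ is the solution of $q'=B(x,\lambda)q$ decaying as $x\to-\infty$ with $p(s_*,\lambda)=v=(p_1,p_2,p_3,p_4)(s_*,\lambda)$, then $$Q^{(1)}(v):=\frac{d}{ds}\omega(v,A(s)v)\Big|_{s=s_*}=\big(p_2(s_*;\lambda)\big)^2.$$
   Context: Fix real $\nu,\mu$ and $f(u)=\nu u^2-u^3-\mu u$. (H1): $\varphi$ is a smooth stationary solution of $u_t=-(1+\partial_x^2)^2u+f(u)$ with $\varphi\to0$ at $\pm\infty$. (H2): $f'(0)<0$. $B(x,\lambda)=\begin{pmatrix}0&0&0&1\\0&0&1&-2\\-\lambda-1+f'(\varphi(x))&0&0&0\\0&1&0&0\end{pmatrix}$; $\omega(u,v)=\langle u,Jv\rangle$, $J=\begin{pmatrix}0&I_2\\-I_2&0\end{pmatrix}$. $\mathbb E^u_-(x,\lambda)$ is the set of values $q(x)$ of solutions of $q'=B(y,\lambda)q$ with $q(y)\to0$ as $y\to-\infty$ (a 2-dimensional Lagrangian plane). $\ell_*^{sand}=\{q\in\mathbb R^4:q_1=q_4=0\}$; $s$ is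 a $\lambda$-conjugate point if $\mathbb E^u_-(s,\lambda)\cap\ell_*^{sand}\ne\{0\}$. For Lagrangian $\ell_0$ and $\mathcal W$ transverse, the graph map of a nearby Lagrangian $\ell$ is the unique linear $A:\ell_0\to\mathcal W$ with $\ell=\{v+Av:v\in\ell_0\}$. *)

From Stdlib Require Import Reals.
From Coquelicot Require Import Coquelicot.
Open Scope R_scope.

Record V4 := mkV4 { c1 : R; c2 : R; c3 : R; c4 : R }.

Definition vadd (u w : V4) : V4 :=
  mkV4 (c1 u + c1 w) (c2 u + c2 w) (c3 u + c3 w) (c4 u + c4 w).
Definition vscal (a : R) (u : V4) : V4 :=
  mkV4 (a * c1 u) (a * c2 u) (a * c3 u) (a * c4 u).
Definition v0 : V4 := mkV4 0 0 0 0.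

Definition fnl (nu mu u : R) : R := nu * u ^ 2 - u ^ 3 - mu * u.
Definition fnl' (nu mu u : R) : R := 2 * nu * u - 3 * u ^ 2 - mu.

(* (H1): phi smooth, stationary solution of u_t = -(1+d_x^2)^2 u + f(u),
   i.e. phi'''' + 2 phi'' + phi = f(phi), and phi -> 0 at +-oo. *)
Definition H1 (nu mu : R) (phi : R -> R) : Prop :=
  (forall (n : nat) (x : R), ex_derive_n phi n x) /\
  (forall x : R,
      - (Derive_n phi 4 x + 2 * Derive_n phi 2 x + phi x) + fnl nu mu (phi x) = 0) /\
  is_lim phi p_infty 0 /\ is_lim phi m_infty 0.

Definition H2 (nu mu : R) : Prop := fnl' nu mu 0 < 0.

Definition Bapp (nu mu : R) (phi : R -> R) (x lam : R) (q : V4) : V4 :=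
  mkV4 (c4 q)
       (c3 q - 2 * c4 q)
       ((- lam - 1 + fnl' nu mu (phi x)) * c1 q)
       (c2 q).

Definition is_sol (nu mu : R) (phi : R -> R) (lam : R) (q : R -> V4) : Prop :=
  forall x : R,
    is_derive (fun y => c1 (q y)) x (c1 (Bapp nu mu phi x lam (q x))) /\
    is_derive (fun y => c2 (q y)) x (c2 (Bapp nu mu phi x lam (q x))) /\
    is_derive (fun y => c3 (q y)) x (c3 (Bapp nu mu phi x lam (q x))) /\
    is_derive (fun y => c4 (q y)) x (c4 (Bapp nu mu phi x lam (q x))).

Definition decays_left (q : R -> V4) : Prop :=
  is_lim (fun y => c1 (q y)) m_infty 0 /\
  is_lim (fun y => c2 (q y)) m_infty 0 /\
  is_lim (fun y => c3 (q y)) m_infty 0 /\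
  is_lim (fun y => c4 (q y)) m_infty 0.

Definition Eu (nu mu : R) (phi : R -> R) (x lam : R) (w : V4) : Prop :=
  exists q : R -> V4, is_sol nu mu phi lam q /\ decays_left q /\ q x = w.

(* omega(u,v) = <u, J v>, J = [[0, I2], [-I2, 0]]. *)
Definition omega (u v : V4) : R :=
  c1 u * c3 v + c2 u * c4 v - c3 u * c1 v - c4 u * c2 v.

Definition ell_sand (q : V4) : Prop := c1 q = 0 /\ c4 q = 0.

Definition conjugate_point (nu mu : R) (phi : R -> R) (lam s : R) : Prop :=
  exists w : V4, w <> v0 /\ Eu nu mu phi s lam w /\ ell_sand w.

Definition lagrangian (W : V4 -> Prop) : Prop :=
  exists w1 w2 : V4,
    (forall a b : R, vadd (vscal a w1) (vscal b w2) = v0 -> a = 0 /\ b = 0) /\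
    (forall u : V4, W u <-> exists a b : R, u = vadd (vscal a w1) (vscal b w2)) /\
    (forall u w : V4, W u -> W w -> omega u w = 0).

Definition transverse (W E : V4 -> Prop) : Prop :=
  (forall u : V4, W u -> E u -> u = v0) /\
  (forall x : V4, exists u w : V4, E u /\ W w /\ x = vadd u w).

Definition graph_map (ell0 W ell : V4 -> Prop) (A0 : V4 -> V4) : Prop :=
  (forall u : V4, ell0 u -> W (A0 u)) /\
  (forall (a b : R) (u w : V4), ell0 u -> ell0 w ->
      A0 (vadd (vscal a u) (vscal b w)) = vadd (vscal a (A0 u)) (vscal b (A0 w))) /\
  (forall x : V4, ell x <-> exists u : V4, ell0 u /\ x = vadd u (A0 u)).

(* B(x, lambda) is Hamiltonian (J B is symmetric), so omega(q(x), r(x)) is constant along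
   any two solutions, hence 0 for solutions decaying at -oo: every E^u_-(x, lambda) is
   isotropic.  Write v = p(s_star) and A(s) v = a(s) w1 + b(s) w2 in a basis of W.  Pairing
   v + A(s) v, which lies in E^u_-(s, lambda), with p(s) and with a second decaying solution r
   gives a 2x2 linear system for (a(s), b(s)); choosing r(s_star) so that it is nondegenerate
   at s_star (possible by transversality), Cramer's rule shows that a and b are differentiable.
   Since omega(p(s), v + A(s) v) = 0,
     omega(v, A(s) v) = omega(v - p(s), v + A(s) v),
   whose derivative at s_star is -omega(B v, v) = p_2(s_star)^2 because v_1 = v_4 = 0. *)

From Pilot Require Import Defs.
From Stdlib Require Import Reals Lra Classical.
From Coquelicot Require Import Coquelicot.
Open Scope R_scope.

(* [Reals] exports [RiemannInt.c1], which would otherwise shadow the first coordinate. *)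
Notation c1 := Defs.c1.

Definition is_derive_V4 (g : R -> V4) (x : R) (d : V4) : Prop :=
  is_derive (fun y => c1 (g y)) x (c1 d) /\ is_derive (fun y => c2 (g y)) x (c2 d) /\
  is_derive (fun y => c3 (g y)) x (c3 d) /\ is_derive (fun y => c4 (g y)) x (c4 d).

Lemma is_derive_eq (f : R -> R) (x l l' : R) : is_derive f x l -> l = l' -> is_derive f x l'.
Proof. now intros H <-. Qed.

Ltac derive_arith :=
  eapply is_derive_eq;
  [ repeat match goal with
    | |- is_derive (fun y => @?f y + @?g y) _ _ => apply (@is_derive_plus _ _ f g)
    | |- is_derive (fun y => @?f y - @?g y) _ _ => apply (@is_derive_minus _ _ f g)
    | |- is_derive (fun y => - @?f y) _ _ => apply (@is_derive_opp _ _ f)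
    | |- is_derive (fun y => @?f y * @?g y) _ _ => apply (@is_derive_mult _ f g)
    | |- is_derive (fun y => @?f y / @?g y) _ _ => apply (is_derive_div f g)
    | |- is_derive (fun _ => ?c) _ _ => apply (@is_derive_const _ _ c)
    | |- forall _ _, _ => exact Rmult_comm
    | |- _ => eassumption
    end
  | unfold minus, plus, opp, mult, zero; simpl ].

Lemma is_derive_omega (u g : R -> V4) (x : R) (du dg : V4) :
  is_derive_V4 u x du -> is_derive_V4 g x dg ->
  is_derive (fun s => omega (u s) (g s)) x (omega du (g x) + omega (u x) dg).
Proof.
  intros (u1 & u2 & u3 & u4) (g1 & g2 & g3 & g4). unfold omega.
  derive_arith. ring.
Qed.

Lemma is_derive_V4_const (v : V4) (x : R) : is_derive_V4 (fun _ => v) x v0.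
Proof. refine (conj _ (conj _ (conj _ _))); apply @is_derive_const. Qed.

Lemma is_derive_V4_lincomb (X Y : R -> R) (v w1 w2 : V4) (x dX dY : R) :
  is_derive X x dX -> is_derive Y x dY ->
  is_derive_V4 (fun s => vadd v (vadd (vscal (X s) w1) (vscal (Y s) w2))) x
    (vadd (vscal dX w1) (vscal dY w2)).
Proof.
  intros HX HY. refine (conj _ (conj _ (conj _ _))); simpl; derive_arith; ring.
Qed.

Lemma locally_neq0 (a : R) : a <> 0 -> locally a (fun y => y <> 0).
Proof.
  intros Ha. exists (mkposreal _ (Rabs_pos_lt a Ha)). intros y Hy ->.
  change (Rabs (0 - a) < Rabs a) in Hy. rewrite Rminus_0_l, Rabs_Ropp in Hy. lra.
Qed.

Lemma null_derivative_lim_eq0 (h : R -> R) (x : R) :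
  (forall y, is_derive h y 0) -> is_lim h m_infty 0 -> h x = 0.
Proof.
  intros Hd Hlim.
  assert (Hconst : forall y, h y = h 0).
  { intro y. destruct (MVT_cor4 h (fun _ => 0) 0 (Rabs (y - 0))) with (b := y)
      as (c & Hc & _); [intros; apply Hd | lra | lra]. }
  assert (Hlim0 : is_lim (fun _ => h 0) m_infty 0)
    by (eapply is_lim_ext; [intro y; apply Hconst | exact Hlim]).
  apply is_lim_unique in Hlim0. rewrite Lim_const in Hlim0.
  rewrite Hconst. now injection Hlim0.
Qed.

Lemma is_lim_mult_m_infty_0 (f g : R -> R) :
  is_lim f m_infty 0 -> is_lim g m_infty 0 -> is_lim (fun y => f y * g y) m_infty 0.
Proof.
  intros Hf Hg. pose proof (is_lim_mult f g m_infty 0 0 Hf Hg I) as H.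
  simpl in H. now rewrite Rmult_0_l in H.
Qed.

Lemma is_lim_omega_decaying (q r : R -> V4) :
  decays_left q -> decays_left r -> is_lim (fun y => omega (q y) (r y)) m_infty 0.
Proof.
  intros (q1 & q2 & q3 & q4) (r1 & r2 & r3 & r4). unfold omega.
  replace 0 with (0 + 0 - 0 - 0) by ring.
  repeat apply is_lim_minus'; try apply is_lim_plus'; now apply is_lim_mult_m_infty_0.
Qed.

Lemma omega_nondegenerate (z : V4) : (forall x, omega x z = 0) -> z = v0.
Proof.
  intros H. destruct z as [z1 z2 z3 z4].
  pose proof (H (mkV4 1 0 0 0)). pose proof (H (mkV4 0 1 0 0)).
  pose proof (H (mkV4 0 0 1 0)). pose proof (H (mkV4 0 0 0 1)).
  unfold omega in *; simpl in *. unfold v0. f_equal; lra.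
Qed.

Lemma transverse_omega_eq0 (E W : V4 -> Prop) (z : V4) :
  transverse W E -> (forall u, E u -> omega u z = 0) -> (forall w, W w -> omega w z = 0) ->
  z = v0.
Proof.
  intros (_ & Hsum) HE HW. apply omega_nondegenerate. intro x.
  destruct (Hsum x) as (u & w & Eu & Ww & ->).
  replace (omega (vadd u w) z) with (omega u z + omega w z) by (unfold omega; simpl; ring).
  rewrite (HE u Eu), (HW w Ww). ring.
Qed.

Definition gram (u e w1 w2 : V4) : R := omega u w1 * omega e w2 - omega u w2 * omega e w1.

Lemma gram_nonzero_of_transverse (E W : V4 -> Prop) (w1 w2 v : V4) :
  (forall a b, vadd (vscal a w1) (vscal b w2) = v0 -> a = 0 /\ b = 0) ->
  (forall u, W u <-> exists a b, u = vadd (vscal a w1) (vscal b w2)) ->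
  (forall u w, W u -> W w -> omega u w = 0) ->
  (forall u w, E u -> E w -> omega u w = 0) ->
  transverse W E -> E v -> v <> v0 ->
  exists e, E e /\ gram v e w1 w2 <> 0.
Proof.
  intros Hind Hspan HWiso HEiso Htr Ev Hv. apply NNPP. intro Hnone.
  set (z := vadd (vscal (- omega v w2) w1) (vscal (omega v w1) w2)).
  assert (Hz : z = v0).
  { apply (transverse_omega_eq0 E W z Htr).
    - intros e Ee. replace (omega e z) with (gram v e w1 w2)
        by (unfold gram, z, omega; simpl; ring).
      apply NNPP. intro Hne. apply Hnone. now exists e.
    - intros w Ww. apply HWiso; [exact Ww | apply Hspan; now exists (- omega v w2), (omega v w1)]. }
  destruct (Hind _ _ Hz) as (Hl2 & Hl1).
  apply Hv, (transverse_omega_eq0 E W v Htr).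
  - intros u Eu. now apply HEiso.
  - intros w Ww. destruct (proj1 (Hspan w) Ww) as (a & b & ->).
    replace (omega (vadd (vscal a w1) (vscal b w2)) v)
      with (- (a * omega v w1 + b * omega v w2)) by (unfold omega; simpl; ring).
    replace (omega v w2) with 0 by lra. rewrite Hl1. ring.
Qed.

(* The solution, by Cramer's rule, of omega(u, x) = omega(e, x) = 0 for x in v + span(w1, w2). *)
Definition cramer_point (u e v w1 w2 : V4) : V4 :=
  vadd v (vadd (vscal (- gram u e v w2 / gram u e w1 w2) w1)
               (vscal (- gram u e w1 v / gram u e w1 w2) w2)).

Lemma cramer_point_unique (u e v w1 w2 : V4) (a b : R) :
  let x := vadd v (vadd (vscal a w1) (vscal b w2)) in
  omega u x = 0 -> omega e x = 0 -> gram u e w1 w2 <> 0 -> x = cramer_point u e v w1 w2.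
Proof.
  intros x Hu He HD.
  assert (Ha : gram u e v w2 + a * gram u e w1 w2 = 0).
  { transitivity (omega u x * omega e w2 - omega u w2 * omega e x).
    - unfold gram, x, omega; simpl; ring.
    - rewrite Hu, He; ring. }
  assert (Hb : gram u e w1 v + b * gram u e w1 w2 = 0).
  { transitivity (omega u w1 * omega e x - omega u x * omega e w1).
    - unfold gram, x, omega; simpl; ring.
    - rewrite Hu, He; ring. }
  unfold cramer_point, x. do 3 f_equal; field_simplify_eq; auto; lra.
Qed.

Lemma cramer_point_self (v e w1 w2 : V4) :
  omega e v = 0 -> cramer_point v e v w1 w2 = v.
Proof.
  intros Hev. unfold cramer_point, gram.
  replace (omega v v) with 0 by (unfold omega; ring). rewrite Hev.
  destruct v; unfold vadd, vscal, Rdiv; simpl; f_equal; ring.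
Qed.

Section DecayingSolutions.

Variables (nu mu : R) (phi : R -> R) (lam : R).

Lemma omega_Bapp_skew (x : R) (u w : V4) :
  omega (Bapp nu mu phi x lam u) w + omega u (Bapp nu mu phi x lam w) = 0.
Proof. unfold omega; simpl; ring. Qed.

Lemma is_derive_omega_sol (q r : R -> V4) (x : R) :
  is_sol nu mu phi lam q -> is_sol nu mu phi lam r ->
  is_derive (fun y => omega (q y) (r y)) x 0.
Proof.
  intros Hq Hr. rewrite <- (omega_Bapp_skew x (q x) (r x)).
  apply is_derive_omega; [apply Hq | apply Hr].
Qed.

Lemma is_derive_omega_sol_const (q : R -> V4) (w : V4) (x : R) :
  is_sol nu mu phi lam q ->
  is_derive (fun s => omega (q s) w) x (omega (Bapp nu mu phi x lam (q x)) w).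
Proof.
  intros Hq. eapply is_derive_eq.
  - apply is_derive_omega; [apply Hq | apply is_derive_V4_const].
  - unfold omega; simpl; ring.
Qed.

Lemma omega_decaying_sol_eq0 (q r : R -> V4) (x : R) :
  is_sol nu mu phi lam q -> is_sol nu mu phi lam r ->
  decays_left q -> decays_left r -> omega (q x) (r x) = 0.
Proof.
  intros Hq Hr Dq Dr. apply (null_derivative_lim_eq0 (fun y => omega (q y) (r y))).
  - intro y. now apply is_derive_omega_sol.
  - now apply is_lim_omega_decaying.
Qed.

Lemma Eu_of_decaying_sol (q : R -> V4) (x : R) :
  is_sol nu mu phi lam q -> decays_left q -> Eu nu mu phi x lam (q x).
Proof. intros Hq Dq. now exists q. Qed.

Lemma Eu_isotropic (x : R) (u w : V4) :
  Eu nu mu phi x lam u -> Eu nu mu phi x lam w -> omega u w = 0.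
Proof.
  intros (q & Hq & Dq & <-) (r & Hr & Dr & <-). now apply omega_decaying_sol_eq0.
Qed.

Lemma omega_Bapp_sand (x : R) (v : V4) :
  ell_sand v -> - omega (Bapp nu mu phi x lam v) v = c2 v ^ 2.
Proof. intros (H1 & H4). unfold omega; simpl. rewrite H1, H4. ring. Qed.

Lemma is_derive_omega_shift (p g : R -> V4) (x : R) (dg : V4) :
  is_sol nu mu phi lam p -> is_derive_V4 g x dg -> g x = p x ->
  is_derive (fun s => omega (p x) (g s) - omega (p s) (g s)) x
    (- omega (Bapp nu mu phi x lam (p x)) (p x)).
Proof.
  intros Hp Hg Hgx. eapply is_derive_eq.
  - apply @is_derive_minus; apply is_derive_omega; try exact Hg; [apply is_derive_V4_const | apply Hp].
  - rewrite Hgx. unfold minus, plus, opp; simpl. unfold omega; simpl; ring.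
Qed.

Lemma ex_derive_gram_sol (p r : R -> V4) (w w' : V4) (x : R) :
  is_sol nu mu phi lam p -> is_sol nu mu phi lam r ->
  ex_derive (fun s => gram (p s) (r s) w w') x.
Proof.
  intros Hp Hr. eexists. unfold gram.
  pose proof (is_derive_omega_sol_const p w x Hp).
  pose proof (is_derive_omega_sol_const p w' x Hp).
  pose proof (is_derive_omega_sol_const r w x Hr).
  pose proof (is_derive_omega_sol_const r w' x Hr).
  derive_arith. reflexivity.
Qed.

Lemma locally_gram_sol_neq0 (p r : R -> V4) (w1 w2 : V4) (x : R) :
  is_sol nu mu phi lam p -> is_sol nu mu phi lam r -> gram (p x) (r x) w1 w2 <> 0 ->
  locally x (fun s => gram (p s) (r s) w1 w2 <> 0).
Proof.
  intros Hp Hr HD.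
  exact (@ex_derive_continuous R_AbsRing R_NormedModule _ _ (ex_derive_gram_sol p r w1 w2 x Hp Hr)
           _ (locally_neq0 _ HD)).
Qed.

Lemma is_derive_V4_cramer_point (p r : R -> V4) (v w1 w2 : V4) (x : R) :
  is_sol nu mu phi lam p -> is_sol nu mu phi lam r -> gram (p x) (r x) w1 w2 <> 0 ->
  exists d, is_derive_V4 (fun s => cramer_point (p s) (r s) v w1 w2) x d.
Proof.
  intros Hp Hr HD.
  destruct (ex_derive_gram_sol p r w1 w2 x Hp Hr) as (dD & HdD).
  destruct (ex_derive_gram_sol p r v w2 x Hp Hr) as (dN1 & HdN1).
  destruct (ex_derive_gram_sol p r w1 v x Hp Hr) as (dN2 & HdN2).
  eexists. apply is_derive_V4_lincomb; derive_arith; reflexivity.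
Qed.

Lemma graph_point_eq_cramer_point (p r : R -> V4) (v w1 w2 Av : V4) (s : R) :
  is_sol nu mu phi lam p -> is_sol nu mu phi lam r ->
  decays_left p -> decays_left r ->
  (exists a b, Av = vadd (vscal a w1) (vscal b w2)) ->
  Eu nu mu phi s lam (vadd v Av) -> gram (p s) (r s) w1 w2 <> 0 ->
  vadd v Av = cramer_point (p s) (r s) v w1 w2.
Proof.
  intros Hp Hr Dp Dr (a & b & ->) Hx HD.
  apply cramer_point_unique; [| | exact HD];
    apply (Eu_isotropic s); auto using Eu_of_decaying_sol.
Qed.

End DecayingSolutions.

Theorem lemma3 (nu mu : R) (phi : R -> R) :
  H1 nu mu phi -> H2 nu mu ->
  forall lam s_star : R,
    fnl' nu mu 0 < lam ->
    conjugate_point nu mu phi lam s_star ->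
    forall (W : V4 -> Prop) (A : R -> V4 -> V4),
      lagrangian W ->
      transverse W (Eu nu mu phi s_star lam) ->
      (exists delta : R, 0 < delta /\
         forall s : R, Rabs (s - s_star) < delta ->
           graph_map (Eu nu mu phi s_star lam) W (Eu nu mu phi s lam) (A s)) ->
      forall (v : V4) (p : R -> V4),
        Eu nu mu phi s_star lam v -> ell_sand v ->
        is_sol nu mu phi lam p -> decays_left p -> p s_star = v ->
        is_derive (fun s => omega v (A s v)) s_star ((c2 (p s_star)) ^ 2).
Proof.
  (* (H1), (H2), lambda > f'(0) and the conjugate point only guarantee that the objects
     in the statement exist; given them, the computation does not use these hypotheses. *)
  intros _ _ lam S _ _ W A (w1 & w2 & Hind & Hspan & HWiso) Htr (del & Hdel & Hgraph)
    v p Ev Hsand Hp Dp <-.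
  destruct (classic (p S = v0)) as [Hv0 | Hv0].
  { rewrite Hv0. eapply is_derive_eq.
    - apply (is_derive_ext (fun _ => 0)); [intro; unfold omega; simpl; ring | apply @is_derive_const].
    - unfold zero; simpl; ring. }
  destruct (gram_nonzero_of_transverse _ W w1 w2 (p S) Hind Hspan HWiso
              (Eu_isotropic nu mu phi lam S) Htr Ev Hv0) as (e & (r & Hr & Dr & <-) & HD).
  set (g := fun s => cramer_point (p s) (r s) (p S) w1 w2).
  destruct (is_derive_V4_cramer_point nu mu phi lam p r (p S) w1 w2 S Hp Hr HD) as (dg & Hdg).
  rewrite <- (omega_Bapp_sand nu mu phi lam S (p S) Hsand).
  apply (is_derive_ext_loc (fun s => omega (p S) (g s) - omega (p s) (g s))).
  2: { apply (is_derive_omega_shift nu mu phi lam p g S dg Hp Hdg).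
       apply cramer_point_self, (omega_decaying_sol_eq0 nu mu phi lam); assumption. }
  eapply filter_imp.
  2: { apply filter_and; [apply (locally_ball S (mkposreal del Hdel)) |
       apply (locally_gram_sol_neq0 nu mu phi lam p r w1 w2 S Hp Hr HD)]. }
  intros s (Hs & HDs). destruct (Hgraph s Hs) as (HW & _ & Hell).
  assert (Hq : Eu nu mu phi s lam (vadd (p S) (A s (p S))))
    by (apply Hell; now exists (p S)).
  unfold g. rewrite <- (graph_point_eq_cramer_point nu mu phi lam p r (p S) w1 w2 _ s
                          Hp Hr Dp Dr (proj1 (Hspan _) (HW _ Ev)) Hq HDs).
  rewrite (Eu_isotropic nu mu phi lam s (p s) _ (Eu_of_decaying_sol nu mu phi lam p s Hp Dp) Hq).
  unfold omega; simpl; ring.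
Qed.
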